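(* Let $\wp$ be a behavioral quantifier prefix with pairwise distinct propositions and let $\Psi\subseteq\mathrm{Asg}(\mathrm{ap}(\wp))$ be Borelian. Then the quantification game $\mathcal G_{\wp,\Psi}$ satisfies: (1) if Eloise wins $\mathcal G_{\wp,\Psi}$, then there exists $E\in\mathrm{evl}_{\exists\forall}(C_{\forall\exists}(\wp))$ with $E\subseteq\Psi$; (2) if Abelard wins $\mathcal G_{\wp,\Psi}$, then $E\not\subseteq\Psi$ for every $E\in\mathrm{evl}_{\exists\forall}(C_{\exists\forall}(\wp))$.
   Context: Let $AP$ be a set of atomic propositions and $\mathbb B=\{\top,\bot\}$. A temporal valuation is a function $f:\mathbb N\to\mathbb B$. An assignment is a partial function $\chi:AP\rightharpoonup(\mathbb N\to\mathbb B)$; $\mathrm{Asg}$ is the set of all assignments, $\mathrm{Asg}(P)$ the set of assignments with domain exactly $P\subseteq AP$. For an assignment $\chi$, $p\in AP$ and a temporal valuation $f$, $\chi[p\mapsto f]$ is the assignment that agrees with $\chi$ except that it maps $p$ to $f$. A hyperassignment is a set $\mathcal X$ with $\emptyset\neq\mathcal X\subseteq 2^{\mathrm{Asg}(P)}$ and $\emptyset\notin\mathcal X$, for some $P\subseteq AP$; this $P$ is denoted $\mathrm{ap}(\mathcal X)$. A choice function for $\mathcal X$ is a map $c:\mathcal X\to\mathrm{Asg}$ with $c(X)\in X$ for all $X\in\mathcal X$. The dual of $\mathcal X$ is $\overline{\mathcal X}=\{\mathrm{img}(c): c\text{ a choice function for }\mathcal X\}$. A functor over $P\subseteq AP$ is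 a function $F:\mathrm{Asg}(P)\to(\mathbb N\to\mathbb B)$; $\mathrm{Fnc}(P)$ is the set of all of them. $\mathrm{ext}(\chi,F,p)=\chi[p\mapsto F(\chi)]$ and $\mathrm{ext}(X,F,p)=\{\mathrm{ext}(\chi,F,p):\chi\in X\}$. For $\chi_1,\chi_2\in\mathrm{Asg}(P)$, $p\in P$, $k\in\mathbb N$: $\chi_1\approx^{>k}_p\chi_2$ iff $\chi_1(q)=\chi_2(q)$ for all $q\in P\setminus\{p\}$ and $\chi_1(p)(t)=\chi_2(p)(t)$ for all $t\le k$; $\chi_1\approx^{\ge k}_p\chi_2$ is defined the same way with $t<k$ in place of $t\le k$. $F\in\mathrm{Fnc}(P)$ is behavioral (resp. strongly behavioral) w.r.t. $p\in P$ if $F(\chi_1)(k)=F(\chi_2)(k)$ for all $k\in\mathbb N$ and all $\chi_1,\chi_2$ with $\chi_1\approx^{>k}_p\chi_2$ (resp. $\chi_1\approx^{\ge k}_p\chi_2$). A quantifier specification is a pair $\sigma=\langle P_B,P_S\rangle$ of subsets of $AP$; $\mathrm{Fnc}_\sigma(P)$ is the set of $F\in\mathrm{Fnc}(P)$ that are behavioral w.r.t. every $p\in P_B\cap P$ and strongly behavioral w.r.t. every $p\in P_S\cap P$. $\mathrm{ext}_\sigma(\mathcal X,p)=\{\mathrm{ext}(X,F,p):X\in\mathcal X,\ F\in\mathrm{Fnc}_\sigma(\mathrm{ap}(\mathcal X))\}$. Union of specifications is componentwise. Write $\mathsf B=\langle AP,\emptyset\rangle$. A quantifier prefix is a finite sequence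 $\wp=Q_1^{\sigma_1}p_1\cdots Q_n^{\sigma_n}p_n$ with $Q_i\in\{\exists,\forall\}$; $\mathrm{ap}(\wp)=\{p_1,\dots,p_n\}$, $\epsilon$ is the empty prefix. It is behavioral if every $\sigma_i=\mathsf B$. The quantifier $\exists$ is $\exists\forall$-coherent and $\forall$ is $\forall\exists$-coherent. Evolution: $\mathrm{evl}_\alpha(\mathcal X,Q^\sigma p)=\mathrm{ext}_\sigma(\mathcal X,p)$ if $Q$ is $\alpha$-coherent, and $\overline{\mathrm{ext}_\sigma(\overline{\mathcal X},p)}$ otherwise; $\mathrm{evl}_\alpha(\mathcal X,\epsilon)=\mathcal X$, $\mathrm{evl}_\alpha(\mathcal X,Q^\sigma p.\wp)=\mathrm{evl}_\alpha(\mathrm{evl}_\alpha(\mathcal X,Q^\sigma p),\wp)$, and $\mathrm{evl}_\alpha(\wp)=\mathrm{evl}_\alpha(\{\{\emptyset\}\},\wp)$ with $\emptyset$ the empty assignment. Canonical forms. Every behavioral prefix $\wp$ can be uniquely written as $\exists^{\mathsf B}\vec q_0.\forall^{\mathsf B}\vec p_1.\exists^{\mathsf B}\vec q_1\cdots\forall^{\mathsf B}\vec p_k.\exists^{\mathsf B}\vec q_k.\forall^{\mathsf B}\vec p_{k+1}$ with $k\in\mathbb N$, $\vec q_0,\vec p_{k+1}$ possibly empty and $\vec p_i,\vec q_i$ nonempty for $1\le i\le k$ (where $Q^\sigma\vec p$ quantifies the entries of $\vec p$ in order); then $C_{\exists\forall}(\wp)=\exists^{\mathsf B}\vec q_0\cdots\exists^{\mathsf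 B}\vec q_k.\forall^{\tau_1}\vec p_1\cdots\forall^{\tau_{k+1}}\vec p_{k+1}$ where $\tau_i=\mathsf B\cup\langle\emptyset,\vec q_i\cup\cdots\cup\vec q_k\rangle$ (for $i=k+1$, $\tau_{k+1}=\mathsf B$). Dually, writing $\wp$ uniquely as $\forall^{\mathsf B}\vec p_0.\exists^{\mathsf B}\vec q_1.\forall^{\mathsf B}\vec p_1\cdots\exists^{\mathsf B}\vec q_k.\forall^{\mathsf B}\vec p_k.\exists^{\mathsf B}\vec q_{k+1}$ (with $\vec p_0,\vec q_{k+1}$ possibly empty, the others nonempty), $C_{\forall\exists}(\wp)=\forall^{\mathsf B}\vec p_0\cdots\forall^{\mathsf B}\vec p_k.\exists^{\tau_1}\vec q_1\cdots\exists^{\tau_{k+1}}\vec q_{k+1}$ with $\tau_i=\mathsf B\cup\langle\emptyset,\vec p_i\cup\cdots\cup\vec p_k\rangle$. Words and Borel sets. For finite $P\subseteq AP$, $\mathrm{Val}(P)$ is the set of maps $P\to\mathbb B$; the word function $w:\mathrm{Asg}(P)\to\mathrm{Val}(P)^\omega$, $w(\chi)_t(p)=\chi(p)(t)$, is a bijection. $\Psi\subseteq\mathrm{Asg}(P)$ is Borelian if $w(\Psi)$ is a Borel set in the product (Cantor) topology on $\mathrm{Val}(P)^\omega$. Games. A game consists of disjoint sets of positions of Eloise and Abelard, an initial position, a move relation in which every position has a successor, a set $O$ of observable positions and a winning set $W\subseteq O^\omega$. A history is a finite path from the initial position; a strategy for a player maps each history ending in one of its positions to a successor of that position; a pair of strategies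 induces a unique infinite play; the observation of a play is the sequence of observable positions occurring in it, in order. Eloise wins if she has a strategy such that for every Abelard strategy the observation of the induced play lies in $W$; Abelard wins if he has a strategy such that for every Eloise strategy the observation is not in $W$. Quantification game $\mathcal G_{\wp,\Psi}$ for a behavioral prefix $\wp=Q_1^{\mathsf B}p_1\cdots Q_n^{\mathsf B}p_n$ (distinct $p_i$) and $\Psi\subseteq\mathrm{Asg}(\mathrm{ap}(\wp))$: positions are the valuations $v$ with domain $\{p_1,\dots,p_m\}$ for some $0\le m\le n$ ($m=|\mathrm{dom}(v)|$); $v$ belongs to Eloise iff $m<n$ and $Q_{m+1}=\exists$, otherwise to Abelard; the initial position is the empty valuation; moves go from $v$ with $m<n$ to any extension of $v$ with domain $\{p_1,\dots,p_{m+1}\}$, and from every total valuation ($m=n$) to the empty valuation; the observable positions are the total valuations $\mathrm{Val}(\mathrm{ap}(\wp))$; the winning set is $W=w(\Psi)$. *)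

From HB Require Import structures.
From mathcomp Require Import all_boot all_order all_algebra.
From mathcomp Require Import all_classical all_reals.
From mathcomp Require Import topology_structure discrete_topology function_spaces.
From mathcomp Require Import measurable_structure.

Local Open Scope classical_set_scope.

Record game := Game {
  gpos : Type;
  gEloise : gpos -> bool;          (* true: position of Eloise; false: of Abelard *)
  ginit : gpos;
  gmove : gpos -> gpos -> Prop;
  gobs : gpos -> Prop;
  gwin : set (nat -> gpos)         (* winning set W, a set of sequences of observable positions *)
}.

Set Implicit Arguments.
Unset Strict Implicit.
Unset Printing Implicit Defensive.

Section Games.
Variable G : game.

Definition history (h : seq (gpos G)) : Prop :=
  h <> [::] /\ head (ginit G) h = ginit G /\
  forall i, i.+1 < size h -> gmove G (nth (ginit G) h i) (nth (ginit G) h i.+1).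

(* A strategy of player [pl] (true = Eloise, false = Abelard). *)
Definition strategy (pl : bool) (s : seq (gpos G) -> gpos G) : Prop :=
  forall h, history h -> gEloise G (last (ginit G) h) = pl ->
    gmove G (last (ginit G) h) (s h).

Fixpoint induced_hist (sE sA : seq (gpos G) -> gpos G) (k : nat) : seq (gpos G) :=
  match k with
  | 0 => [:: ginit G]
  | k'.+1 => let h := induced_hist sE sA k' in
             rcons h (if gEloise G (last (ginit G) h) then sE h else sA h)
  end.

Definition induced_play sE sA : nat -> gpos G :=
  fun k => last (ginit G) (induced_hist sE sA k).

Definition observation (pi : nat -> gpos G) (o : nat -> gpos G) : Prop :=
  exists f : nat -> nat,
    (forall k, f k < f k.+1) /\
    (forall k, gobs G (pi (f k))) /\
    (forall j, gobs G (pi j) -> exists k, f k = j) /\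
    (forall k, o k = pi (f k)).

(* The observation of [pi] lies in W (a finite observation never does). *)
Definition obs_in_W (pi : nat -> gpos G) : Prop :=
  exists o, observation pi o /\ gwin G o.

Definition Eloise_wins : Prop :=
  exists sE, strategy true sE /\
    forall sA, strategy false sA -> obs_in_W (induced_play sE sA).

Definition Abelard_wins : Prop :=
  exists sA, strategy false sA /\
    forall sE, strategy true sE -> ~ obs_in_W (induced_play sE sA).

End Games.

Section QPTL.
Variable AP : eqType.

Definition tval := nat -> bool.
Definition Asg := AP -> option tval.

Definition dom {T : Type} (f : AP -> option T) : set AP := [set p | f p <> None].

Definition AsgP (P : set AP) : set Asg := [set chi | dom chi = P].

Definition empty_asg : Asg := fun _ => None.

Definition upd (chi : Asg) (p : AP) (f : tval) : Asg :=
  fun q => if q == p then Some f else chi q.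

Definition choice_fun (HX : set (set Asg)) (c : set Asg -> Asg) : Prop :=
  forall X, HX X -> X (c X).

Definition dual (HX : set (set Asg)) : set (set Asg) :=
  [set Y | exists c, choice_fun HX c /\ Y = c @` HX].

(* functors (only their values on Asg(P) matter) *)
Definition functor := Asg -> tval.

Definition eq_upto_le (P : set AP) (p : AP) (k : nat) (c1 c2 : Asg) : Prop :=
  (forall q, P q -> q <> p -> c1 q = c2 q) /\
  (forall t, t <= k -> omap (fun f => f t) (c1 p) = omap (fun f => f t) (c2 p)).

Definition eq_upto_lt (P : set AP) (p : AP) (k : nat) (c1 c2 : Asg) : Prop :=
  (forall q, P q -> q <> p -> c1 q = c2 q) /\
  (forall t, t < k -> omap (fun f => f t) (c1 p) = omap (fun f => f t) (c2 p)).

Definition behavioral (P : set AP) (F : functor) (p : AP) : Prop :=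
  forall k c1 c2, AsgP P c1 -> AsgP P c2 -> eq_upto_le P p k c1 c2 -> F c1 k = F c2 k.

Definition strongly_behavioral (P : set AP) (F : functor) (p : AP) : Prop :=
  forall k c1 c2, AsgP P c1 -> AsgP P c2 -> eq_upto_lt P p k c1 c2 -> F c1 k = F c2 k.

(* quantifier specifications <P_B, P_S> *)
Definition spec := (set AP * set AP)%type.
Definition specB : spec := (setT, set0).
Definition spec_union (s1 s2 : spec) : spec := (s1.1 `|` s2.1, s1.2 `|` s2.2).

Definition Fnc_sigma (P : set AP) (sigma : spec) (F : functor) : Prop :=
  (forall p, sigma.1 p -> P p -> behavioral P F p) /\
  (forall p, sigma.2 p -> P p -> strongly_behavioral P F p).

Definition ext_set (X : set Asg) (F : functor) (p : AP) : set Asg :=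
  [set upd chi p (F chi) | chi in X].

(* ext_sigma(HX, p), where P = ap(HX) *)
Definition ext_sigma (P : set AP) (sigma : spec) (HX : set (set Asg)) (p : AP)
  : set (set Asg) :=
  [set Y | exists X F, HX X /\ Fnc_sigma P sigma F /\ Y = ext_set X F p].

Inductive quant := QEx | QAll.
Definition quant_eqb (q1 q2 : quant) : bool :=
  match q1, q2 with QEx, QEx | QAll, QAll => true | _, _ => false end.

Inductive alt := AltEA | AltAE .
Definition coherent (q : quant) (a : alt) : bool :=
  match q, a with QEx, AltEA | QAll, AltAE => true | _, _ => false end.

Record qentry := QE { qq : quant; qs : spec; qp : AP }.
Definition qprefix := seq qentry.

Definition ap (pre : qprefix) : set AP := [set p | p \in map qp pre].

Fixpoint behavioral_prefix (pre : qprefix) : Prop :=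
  match pre with
  | [::] => True
  | e :: r => qs e = specB /\ behavioral_prefix r
  end.

(* one evolution step; P is ap(HX) *)
Definition evl_step (a : alt) (P : set AP) (HX : set (set Asg)) (e : qentry) :=
  if coherent (qq e) a then ext_sigma P (qs e) HX (qp e)
  else dual (ext_sigma P (qs e) (dual HX) (qp e)).

Fixpoint evl_from (a : alt) (P : set AP) (HX : set (set Asg)) (pre : qprefix)
  : set (set Asg) :=
  match pre with
  | [::] => HX
  | e :: pre' => evl_from a (P `|` [set qp e]) (evl_step a P HX e) pre'
  end.

Definition evl (a : alt) (pre : qprefix) : set (set Asg) :=
  evl_from a set0 [set [set empty_asg]] pre.

(* canonical forms: the quantifiers of kind [q1] first (spec B, in order),
   then the others (in order), each getting spec B u <0, {q1-quantified
   propositions occurring after it in pre}> *)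
Definition props_after (q1 : quant) (r : qprefix) : set AP :=
  [set p | p \in [seq qp e | e <- r & quant_eqb (qq e) q1]].

Fixpoint canon_rest (q1 : quant) (pre : qprefix) : qprefix :=
  match pre with
  | [::] => [::]
  | e :: r =>
      if quant_eqb (qq e) q1 then canon_rest q1 r
      else QE (qq e) (spec_union specB (set0, props_after q1 r)) (qp e)
             :: canon_rest q1 r
  end.

Definition canon (q1 : quant) (pre : qprefix) : qprefix :=
  [seq QE q1 specB (qp e) | e <- pre & quant_eqb (qq e) q1] ++ canon_rest q1 pre.

Definition C_EA (pre : qprefix) : qprefix := canon QEx pre.
Definition C_AE (pre : qprefix) : qprefix := canon QAll pre.

Definition valuation := AP -> option bool.

Definition ValP (P : set AP) := {v : valuation | dom v = P}.
HB.instance Definition _ P := gen_eqMixin (ValP P).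
HB.instance Definition _ P := gen_choiceMixin (ValP P).

Definition word (chi : Asg) (t : nat) : valuation :=
  fun p => omap (fun f => f t) (chi p).

Definition words_space (P : set AP) :=
  prod_topology (fun _ : nat => discrete_topology (ValP P)).

Definition word_image (P : set AP) (Psi : set Asg) : set (words_space P) :=
  [set u : words_space P | exists chi, Psi chi /\
      forall t, proj1_sig (u t : ValP P) = word chi t].

Definition Borel_set (T : topologicalType) (A : set T) : Prop :=
  <<s [set: T], @open T >> A.

Definition Borelian (P : set AP) (Psi : set Asg) : Prop :=
  Borel_set (@word_image P Psi).

Definition dom_prefix (pre : qprefix) (m : nat) : set AP :=
  [set p | p \in take m (map qp pre)].

Definition qpos (pre : qprefix) :=
  {v : valuation | exists m, m <= size pre /\ dom v = dom_prefix pre m}.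

Lemma qinit_proof (pre : qprefix) :
  exists m, m <= size pre /\ dom (fun _ : AP => @None bool) = dom_prefix pre m.
Proof.
exists 0; split => //; rewrite /dom /dom_prefix take0.
by apply/seteqP; split => p //=.
Qed.

Definition qinit (pre : qprefix) : qpos pre := exist _ (fun _ => None) (qinit_proof pre).

Definition qEloise (pre : qprefix) (v : qpos pre) : bool :=
  `[< exists m e, dom (proj1_sig v) = dom_prefix pre m /\
        ohead (drop m pre) = Some e /\ qq e = QEx >].

Definition qmove (pre : qprefix) (v v' : qpos pre) : Prop :=
  (exists m, m < size pre /\ dom (proj1_sig v) = dom_prefix pre m /\
     dom (proj1_sig v') = dom_prefix pre m.+1 /\
     (forall p, proj1_sig v p <> None -> proj1_sig v' p = proj1_sig v p))
  \/ (dom (proj1_sig v) = ap pre /\ dom (proj1_sig v') = set0).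

Definition qobs (pre : qprefix) (v : qpos pre) : Prop := dom (proj1_sig v) = ap pre.

Definition qwin (pre : qprefix) (Psi : set Asg) : set (nat -> qpos pre) :=
  [set o | exists chi, Psi chi /\ forall t, proj1_sig (o t) = word chi t].

Definition qgame (pre : qprefix) (Psi : set Asg) : game :=
  @Game (qpos pre) (@qEloise pre) (qinit pre) (@qmove pre) (@qobs pre)
        (@qwin pre Psi).

End QPTL.

From Pilot Require Import Defs.
From HB Require Import structures.
From mathcomp Require Import all_boot all_order all_algebra.
From mathcomp Require Import all_classical all_reals.
From mathcomp Require Import topology_structure discrete_topology function_spaces.
From mathcomp Require Import measurable_structure.
From mathcomp Require Import zify.
Local Open Scope classical_set_scope.
Set Implicit Arguments.
Unset Strict Implicit.
Unset Printing Implicit Defensive.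

(* Fix a strategy s of one player and let the other player be "scripted":
   given an assignment a, the scripted player copies a bit by bit while s
   answers.  The bit s then plays for its own proposition q in round t defines
   a functor [response q a]; it only reads earlier scripted bits, so it is
   behavioral, and strongly behavioral in the scripted propositions placed
   after q -- exactly the specification q gets in the canonical form.  An
   assignment is [consistent] when s's propositions carry the response to it;
   a total consistent assignment is the outcome of a play of s.
   After four one-step facts on evolution and the combinatorics of plays in
   the quantification game, we follow the canonical prefix block by block:
   Eloise's winning strategy yields an element of evl(C_AE) of outcomes, all
   in Psi; Abelard's finds an outcome outside Psi in each element of
   evl(C_EA). *)

Definition pick {T : Type} (d : T) (P : T -> Prop) : T :=
  match pselect (exists x, P x) with
  | left H => proj1_sig (cid H)
  | right _ => d
  end.

Lemma pickP {T : Type} (d : T) (P : T -> Prop) : (exists x, P x) -> P (pick d P).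
Proof. by rewrite /pick; case: pselect => // H _; exact: proj2_sig (cid H). Qed.

Lemma pick_ind {T : Type} (d : T) (P R : T -> Prop) :
  R d -> (forall x, P x -> R x) -> R (pick d P).
Proof. by rewrite /pick; case: pselect => // H _ HPR; apply: HPR; exact: proj2_sig (cid H). Qed.

Section Evolution.
Variable AP : eqType.
Implicit Types (A X Y : set (Asg AP)) (HX : set (set (Asg AP))) (F : functor AP).

Definition meets X A := exists y, X y /\ A y.

Definition upd_any A p := [set y | exists a f, A a /\ y = upd a p f].
Definition upd_by A p F := [set y | exists a, A a /\ y = upd a p (F a)].

Lemma meets_sub X A B : meets X A -> A `<=` B -> meets X B.
Proof. by move=> [y [Xy Ay]] AB; exists y; split => //; apply: AB. Qed.

Lemma ext_sigma_sub P sg HX X A p F : HX X -> X `<=` A -> Fnc_sigma P sg F ->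
  ext_sigma P sg HX p (ext_set X F p) /\ ext_set X F p `<=` upd_by A p F.
Proof.
move=> hX XA hF; split; first by exists X, F.
by move=> y [a Xa <-]; exists a; split => //; exact: XA.
Qed.

(* Incoherent step: whatever the opponent's functors, choosing in each of
   them the image of an element of X yields a member inside [upd_any A p]. *)
Lemma dual_ext_sigma_sub P sg HX X A p : HX X -> X `<=` A ->
  exists Y, dual (ext_sigma P sg (dual HX) p) Y /\ Y `<=` upd_any A p.
Proof.
move=> hX XA.
pose c W := pick (@empty_asg AP) (fun y => W y /\ upd_any A p y).
have hc W : ext_sigma P sg (dual HX) p W -> W (c W) /\ upd_any A p (c W).
  move=> [Z [F [[c0 [hc0 EZ]] [_ EW]]]].
  apply: (@pickP _ _ (fun y => W y /\ upd_any A p y)).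
  exists (upd (c0 X) p (F (c0 X))); rewrite EW; split.
    by exists (c0 X) => //; rewrite EZ; exists X.
  by exists (c0 X), (F (c0 X)); split => //; apply: XA; exact: hc0.
exists (c @` ext_sigma P sg (dual HX) p); split.
  by exists c; split => // W hW; exact: (hc W hW).1.
by move=> y [W hW <-]; exact: (hc W hW).2.
Qed.

Lemma ext_sigma_meets P sg HX A p : (forall X, HX X -> meets X A) ->
  forall Y, ext_sigma P sg HX p Y -> meets Y (upd_any A p).
Proof.
move=> H Y [X [F [hX [_ ->]]]]; have [a [Xa Aa]] := H X hX.
by exists (upd a p (F a)); split; [exists a | exists a, (F a)].
Qed.

(* Incoherent step, using a chosen functor [G]: every member of the dual
   meets the updates of A by G, since the dual of HX contains a set of
   witnesses of A, which G extends to a member of the inner extension. *)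
Lemma dual_ext_sigma_meets P sg HX A p G : (forall X, HX X -> meets X A) ->
  Fnc_sigma P sg G ->
  forall Y, dual (ext_sigma P sg (dual HX) p) Y -> meets Y (upd_by A p G).
Proof.
move=> H hG Y [c [hc ->]].
pose c0 X := pick (@empty_asg AP) (fun y => X y /\ A y).
have hc0 X : HX X -> X (c0 X) /\ A (c0 X) by move=> hX; apply: (@pickP _ _ (fun y => X y /\ A y)); exact: H.
have hZ : dual HX (c0 @` HX) by exists c0; split => // X hX; exact: (hc0 X hX).1.
have hW : ext_sigma P sg (dual HX) p (ext_set (c0 @` HX) G p) by exists (c0 @` HX), G.
exists (c (ext_set (c0 @` HX) G p)); split; first by exists (ext_set (c0 @` HX) G p).
have [z [X hX Ez] Ecw] := hc _ hW.
by exists z; split; [rewrite -Ez; exact: (hc0 X hX).2 | rewrite Ecw].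
Qed.

Definition add_props (P : set AP) (l : qprefix AP) :=
  foldl (fun P e => P `|` [set qp e]) P l.

Lemma evl_from_cat a P HX (l1 l2 : qprefix AP) :
  evl_from a P HX (l1 ++ l2) = evl_from a (add_props P l1) (evl_from a P HX l1) l2.
Proof. by elim: l1 P HX => [//|e l IH] P HX; exact: IH. Qed.

Lemma add_props_sub P (l : qprefix AP) : P `<=` add_props P l.
Proof. by elim: l P => [|e l IH] P q Pq //=; apply: IH; left. Qed.

Lemma add_props_mem P (l : qprefix AP) q :
  q \in [seq qp e | e <- l] -> add_props P l q.
Proof.
elim: l P => [//|e l IH] P /=; rewrite in_cons => /orP [/eqP ->|/IH //].
by apply: add_props_sub; right.
Qed.

End Evolution.

Section Combinatorics.

Lemma mem_map_filter (T : Type) (U : eqType) (f : T -> U) (p : pred T) (l : seq T) x :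
  x \in [seq f e | e <- l & p e] -> x \in [seq f e | e <- l].
Proof.
elim: l => //= e l IH; case: (p e) => /=; rewrite !in_cons; last by move/IH => ->; rewrite orbT.
by case/orP=> [->//|/IH ->]; rewrite orbT.
Qed.

Lemma mem_map_filter_split (T : Type) (U : eqType) (f : T -> U) (p : pred T) (l : seq T) x :
  (x \in [seq f e | e <- l & p e]) || (x \in [seq f e | e <- l & ~~ p e]) =
  (x \in [seq f e | e <- l]).
Proof.
elim: l => //= e l IH; case: (p e) => /=; rewrite !in_cons -IH;
  by case: (x == f e); rewrite ?orbT.
Qed.

Lemma incr_le (f : nat -> nat) : (forall k, f k < f k.+1) ->
  forall i j, i <= j -> f i <= f j.
Proof.
move=> hf i j hij; rewrite -(subnKC hij); elim: (j - i) => [|d IH]; first by rewrite addn0.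
by rewrite addnS (leq_trans IH) // ltnW.
Qed.

Lemma incr_lt (f : nat -> nat) : (forall k, f k < f k.+1) ->
  forall i j, f i < f j -> i < j.
Proof.
move=> hf i j h; rewrite ltnNge; apply/negP => hji.
by have := incr_le hf hji; rewrite leqNgt h.
Qed.

(* A set of naturals has at most one increasing enumeration; this makes the
   observation of a play unique. *)
Lemma incr_enum_unique (O : nat -> Prop) (f g : nat -> nat) :
  (forall k, f k < f k.+1) -> (forall k, g k < g k.+1) ->
  (forall k, O (f k)) -> (forall k, O (g k)) ->
  (forall j, O j -> exists k, f k = j) -> (forall j, O j -> exists k, g k = j) ->
  forall t, f t = g t.
Proof.
move=> hf hg Of Og Hf Hg; elim => [|t IH].
  have [k fk] := Hf _ (Og 0); have [k' gk'] := Hg _ (Of 0).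
  by apply/eqP; rewrite eqn_leq -{1}fk -{2}gk' !incr_le.
have [k gk] := Hg _ (Of t.+1); have [k' fk'] := Hf _ (Og t.+1).
have h1 : t < k by apply: (incr_lt hg); rewrite gk -IH.
have h2 : t < k' by apply: (incr_lt hf); rewrite fk' IH.
by apply/eqP; rewrite eqn_leq -{1}fk' -{2}gk !incr_le.
Qed.

(* Euclidean division by [d.+1]: round [t], step [m] of the round. *)
Lemma divmod_round t m d : m < d.+1 ->
  (t * d.+1 + m) %% d.+1 = m /\ (t * d.+1 + m) %/ d.+1 = t.
Proof. by move=> h; rewrite modnMDl modn_small // divnMDl // divn_small ?addn0. Qed.

Lemma divmod_succ_inner k d : k %% d.+1 < d ->
  k.+1 %% d.+1 = (k %% d.+1).+1 /\ k.+1 %/ d.+1 = k %/ d.+1.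
Proof.
move=> h; have E := divn_eq k d.+1.
have -> : k.+1 = k %/ d.+1 * d.+1 + (k %% d.+1).+1 by rewrite {1}E addnS.
exact: divmod_round.
Qed.

Lemma divmod_succ_last k d : k %% d.+1 = d ->
  k.+1 %% d.+1 = 0 /\ k.+1 %/ d.+1 = (k %/ d.+1).+1.
Proof.
move=> h; have E := divn_eq k d.+1.
have -> : k.+1 = (k %/ d.+1).+1 * d.+1 by rewrite {1}E h mulSnr addnS.
by rewrite modnMl mulnK.
Qed.

End Combinatorics.

Section Words.
Variable AP : eqType.

Lemma word_inj (a b : Asg AP) : (forall t, word a t = word b t) -> a = b.
Proof.
move=> H; apply: funext => q.
have Hq t : omap (fun f => f t) (a q) = omap (fun f => f t) (b q).
  by have := congr1 (fun w => w q) (H t).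
case Ea: (a q) (Hq 0) => [f|]; case Eb: (b q) => [g|] //= _.
by congr Some; apply: funext => t; have := Hq t; rewrite Ea Eb /=; case.
Qed.

Definition ext_val (v : valuation AP) (p : AP) (b : bool) : valuation AP :=
  fun q => if q == p then Some b else v q.

Lemma dom_ext_val v p b : dom (ext_val v p b) = dom v `|` [set p].
Proof.
apply/seteqP; split => q; rewrite /dom /ext_val /=.
  by case: eqP => [->|_] H; [right | left].
by case: eqP => [_ _ //|ne [//|/= qp]]; case: ne.
Qed.

Lemma dom_None (v : valuation AP) D q : dom v = D -> ~ D q -> v q = None.
Proof. by move=> <-; rewrite /dom /=; case: (v q) => // b H; exfalso; apply: H. Qed.

End Words.

Section Plays.
Variable AP : eqType.
Variable pre : qprefix AP.
Variable x0 : AP.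
Variable Psi : set (Asg AP).
Hypothesis U : uniq [seq qp e | e <- pre].

Local Notation ps := [seq qp e | e <- pre].
Local Notation n := (size pre).
Local Notation e0 := (QE QEx (specB AP) x0).
Local Notation G := (qgame pre Psi).
Local Notation lst := (last (qinit pre)).

Lemma size_ps : size ps = n. Proof. by rewrite size_map. Qed.

Lemma nth_ps_inj m m' : m < n -> m' < n -> nth x0 ps m = nth x0 ps m' -> m = m'.
Proof.
move=> hm hm' E; have hm1 : m < size ps by rewrite size_ps.
by rewrite -(index_uniq x0 hm1 U) E index_uniq // size_ps.
Qed.

Lemma nth_ps_notin_take m : m < n -> nth x0 ps m \notin take m ps.
Proof.
move=> hm; have := take_uniq m.+1 U.
by rewrite (take_nth x0) ?size_ps // rcons_uniq; case/andP.
Qed.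

Lemma nth_ps_in_take m m' : m < m' -> m < n -> nth x0 ps m \in take m' ps.
Proof.
move=> h1 h2; rewrite -(nth_take x0 h1); apply: mem_nth.
by rewrite size_take size_ps; case: ifP.
Qed.

Lemma dom_prefix_inj m m' : m <= n -> m' <= n ->
  dom_prefix pre m = dom_prefix pre m' -> m = m'.
Proof.
have key a b : a <= n -> b <= n -> dom_prefix pre a = dom_prefix pre b -> ~ a < b.
  move=> ha hb Eab lt.
  have : dom_prefix pre b (nth x0 ps a) by rewrite /dom_prefix /= nth_ps_in_take // (leq_trans lt).
  rewrite -Eab /dom_prefix /= => H.
  by have := nth_ps_notin_take (leq_trans lt hb); rewrite H.
move=> hm hm' E; apply/eqP; rewrite eqn_leq; apply/andP; split; rewrite leqNgt; apply/negP.
  exact: (key m' m hm' hm (esym E)).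
exact: (key m m' hm hm' E).
Qed.

Lemma dom_prefix_size : dom_prefix pre n = ap pre.
Proof. by rewrite /dom_prefix /ap take_oversize // size_ps. Qed.

Lemma dom_prefix0 : dom_prefix pre 0 = set0.
Proof. by rewrite /dom_prefix take0; apply/seteqP; split => q. Qed.

Lemma dom_prefixS m : m < n -> dom_prefix pre m.+1 = dom_prefix pre m `|` [set nth x0 ps m].
Proof.
move=> hm; rewrite /dom_prefix (take_nth x0) ?size_ps //.
apply/seteqP; split => q /=; rewrite mem_rcons in_cons.
  by case/orP => [/eqP ->|->]; [right|left].
by case => [->|->]; rewrite ?eqxx ?orbT.
Qed.

Lemma qpos_dom (v : qpos pre) : exists m, m <= n /\ dom (sval v) = dom_prefix pre m.
Proof. exact: (proj2_sig v). Qed.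

Definition ext_qpos (v : qpos pre) m (b : bool) (h : dom (sval v) = dom_prefix pre m)
  (hm : m < n) : qpos pre.
Proof.
exists (ext_val (sval v) (nth x0 ps m) b); exists m.+1; split => //.
by rewrite dom_ext_val h dom_prefixS.
Defined.

Lemma qmove_ext (v v' : qpos pre) m b : dom (sval v) = dom_prefix pre m -> m < n ->
  sval v' = ext_val (sval v) (nth x0 ps m) b -> qmove v v'.
Proof.
move=> h hm E; left; exists m; split => //; split => //; split.
  by rewrite E dom_ext_val h dom_prefixS.
move=> p hp; rewrite E /ext_val; case: eqP => // ep.
have : dom_prefix pre m p by rewrite -h.
by rewrite /dom_prefix /= ep (negbTE (nth_ps_notin_take hm)).
Qed.

Lemma qmove_reset (v : qpos pre) : dom (sval v) = ap pre -> qmove v (qinit pre).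
Proof. by move=> h; right; split => //; apply/seteqP; split => q. Qed.

Lemma qmove_total (v : qpos pre) : exists v', qmove v v'.
Proof.
have [m [hm h]] := qpos_dom v.
case: (ltnP m n) => hmn.
  by exists (ext_qpos true h hmn); apply: (qmove_ext (b:=true) h hmn).
have Emn : m = n by apply/eqP; rewrite eqn_leq hm.
by exists (qinit pre); apply: qmove_reset; rewrite h Emn dom_prefix_size.
Qed.

Lemma qmove_inv (v v' : qpos pre) m : m <= n -> dom (sval v) = dom_prefix pre m ->
  qmove v v' ->
  (m < n /\ dom (sval v') = dom_prefix pre m.+1 /\
     (forall p, sval v p <> None -> sval v' p = sval v p)) \/
  (m = n /\ dom (sval v') = set0).
Proof.
move=> hm h [[m' [hm' [h1 [h2 h3]]]]|[h1 h2]].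
  have E : m = m' by apply: dom_prefix_inj => //; [exact: ltnW | rewrite -h -h1].
  by subst; left.
by right; split => //; apply: dom_prefix_inj => //; rewrite -h h1 dom_prefix_size.
Qed.

Lemma ohead_drop (s : seq (qentry AP)) m : m < size s -> ohead (drop m s) = Some (nth e0 s m).
Proof. by move=> h; rewrite (drop_nth e0 h). Qed.

Lemma qEloiseE (v : qpos pre) m : m <= n -> dom (sval v) = dom_prefix pre m ->
  qEloise v = (m < n) && quant_eqb (qq (nth e0 pre m)) QEx.
Proof.
move=> hm h; rewrite /qEloise.
case E: ((m < n) && _).
  apply/asboolP; exists m, (nth e0 pre m); split => //; split.
    by apply: ohead_drop; case/andP: E.
  by case/andP: E => _; case: (qq _).
apply/asboolP => -[m' [e [h1 [h2 h3]]]].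
have hm' : m' < n by rewrite ltnNge; apply/negP => hh; rewrite drop_oversize in h2.
have Em : m = m' by apply: dom_prefix_inj => //; [exact: ltnW | rewrite -h -h1].
subst; rewrite ohead_drop // in h2; case: h2 => h2.
by move: E; rewrite hm' h2 h3.
Qed.

Definition mix (sE sA : seq (qpos pre) -> qpos pre) (h : seq (qpos pre)) : qpos pre :=
  if qEloise (lst h) then sE h else sA h.

Fixpoint hist (sg : seq (qpos pre) -> qpos pre) k : seq (qpos pre) :=
  match k with
  | 0 => [:: qinit pre]
  | k'.+1 => rcons (hist sg k') (sg (hist sg k'))
  end.

Definition pos sg k := lst (hist sg k).

Lemma induced_histE sE sA k : @induced_hist G sE sA k = hist (mix sE sA) k.
Proof. by elim: k => //= k ->. Qed.

Lemma induced_playE sE sA : @induced_play G sE sA = pos (mix sE sA).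
Proof. by apply: funext => k; rewrite /induced_play induced_histE. Qed.

Lemma size_hist sg k : size (hist sg k) = k.+1.
Proof. by elim: k => //= k IH; rewrite size_rcons IH. Qed.

Lemma posS sg k : pos sg k.+1 = sg (hist sg k).
Proof. by rewrite /pos /= last_rcons. Qed.

Definition legal (sg : seq (qpos pre) -> qpos pre) :=
  forall h, @history G h -> qmove (lst h) (sg h).

Lemma hist_history sg : legal sg -> forall k, @history G (hist sg k).
Proof.
move=> V; elim => [|k [ne [hd hm]]].
  by split => //; split => //= i; rewrite ltnS ltn0.
have Vh := V _ (conj ne (conj hd hm)); rewrite [hist _ _]/=.
move: (hist sg k) ne hd hm Vh => h ne hd hm Vh.
split; first by move/(congr1 size); rewrite size_rcons.
split; first by move: ne hd; case: h {hm Vh} => [ne' _|a l _ /=]; first by case: ne'.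
move=> i; rewrite size_rcons => hi; rewrite !nth_rcons.
case: (ltnP i.+1 (size h)) => hi2; first by rewrite (ltnW hi2); apply: hm.
have Ei : i.+1 = size h by apply/eqP; rewrite eqn_leq hi2 -ltnS hi.
have -> : nth (ginit G) h i = lst h by rewrite -nth_last -Ei.
by rewrite -Ei eqxx ltnSn.
Qed.

Lemma legal_qmove sg k : legal sg -> qmove (pos sg k) (pos sg k.+1).
Proof. by move=> V; rewrite posS; exact: (V _ (hist_history V k)). Qed.

Lemma dom_pos sg : legal sg -> forall k, dom (sval (pos sg k)) = dom_prefix pre (k %% n.+1).
Proof.
move=> V; elim => [|k IH].
  by rewrite mod0n dom_prefix0; apply/seteqP; split => q /=; [move=> H; apply: H|].
have hr : k %% n.+1 <= n by rewrite -ltnS ltn_pmod.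
case: (qmove_inv hr IH (legal_qmove k V)) => [[hlt [h1 _]]|[he h1]].
  by rewrite (divmod_succ_inner hlt).1.
by rewrite (divmod_succ_last he).1 dom_prefix0.
Qed.

Definition play_bit sg k : bool := odflt false (sval (pos sg k.+1) (nth x0 ps (k %% n.+1))).

Lemma pos_values sg : legal sg -> forall k i, i < k %% n.+1 ->
  sval (pos sg k) (nth x0 ps i) = Some (play_bit sg (k %/ n.+1 * n.+1 + i)).
Proof.
move=> V; elim => [|k IH] i; first by rewrite mod0n.
have hr : k %% n.+1 <= n by rewrite -ltnS ltn_pmod.
case: (qmove_inv hr (dom_pos V k) (legal_qmove k V)) => [[hlt [h1 h2]]|[he h1]];
  last by rewrite (divmod_succ_last he).1.
have [E1 E2] := divmod_succ_inner hlt.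
rewrite E1 E2 ltnS leq_eqVlt => /orP [/eqP ->|hi]; last by rewrite h2 IH.
have : dom (sval (pos sg k.+1)) (nth x0 ps (k %% n.+1)).
  by rewrite h1 dom_prefixS //; right.
by rewrite -divn_eq /play_bit /dom /=; case: (sval _ _).
Qed.

Lemma qobs_pos sg : legal sg -> forall k, qobs (pos sg k) <-> k %% n.+1 = n.
Proof.
move=> V k; rewrite /qobs dom_pos // -dom_prefix_size; split; last by move->.
by apply: dom_prefix_inj; rewrite // -ltnS ltn_pmod.
Qed.

Definition play_asg sg : Asg AP :=
  fun q => if q \in ps then Some (fun t => play_bit sg (t * n.+1 + index q ps)) else None.

Lemma word_pos sg : legal sg ->
  forall t, sval (pos sg (t * n.+1 + n)) = word (play_asg sg) t.
Proof.
move=> V t; apply: funext => q; rewrite /word /play_asg.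
have [Em Ed] := divmod_round t (ltnSn n).
case: ifP => qin.
  have hi : index q ps < n by rewrite -size_ps index_mem.
  by rewrite -{1}(nth_index x0 qin) (pos_values V) ?Em // Ed.
by apply: (dom_None (dom_pos V _)); rewrite Em dom_prefix_size /ap /= qin.
Qed.

Lemma obs_in_W_play sg : legal sg -> (@obs_in_W G (pos sg) <-> Psi (play_asg sg)).
Proof.
move=> V; pose g t := t * n.+1 + n.
have gi k : g k < g k.+1 by rewrite /g ltn_add2r ltn_mul2r ltnSn.
have go k : qobs (pos sg (g k)) := (qobs_pos V _).2 (divmod_round k (ltnSn n)).1.
have gh j : qobs (pos sg j) -> exists k, g k = j.
  move=> /(qobs_pos V) hj; exists (j %/ n.+1).
  by rewrite /g; apply/esym; rewrite {1}(divn_eq j n.+1) hj.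
split.
  move=> [o [[f [fi [fo [fh fe]]]] [chi [Pchi Hw]]]].
  have Efg := @incr_enum_unique (fun j => qobs (pos sg j)) f g fi gi fo go fh gh.
  suff -> : play_asg sg = chi by [].
  by apply: word_inj => t; rewrite -word_pos // -Hw fe Efg.
move=> Ps; exists (fun t => pos sg (g t)); split; first by exists g.
by exists (play_asg sg); split => // t; exact: word_pos.
Qed.


Section Counterplay.
(* [pl] is the scripted player (true: Eloise), whose quantifier is [Qpl];
   [s] is the strategy of the other player. *)
Variable pl : bool.
Local Notation Qpl := (if pl then QEx else QAll).

Definition scripted_at m := quant_eqb (qq (nth e0 pre m)) Qpl.

Definition scripted_bit (a : Asg AP) m t : bool :=
  if (m < n) && scripted_at m then odflt false (omap (fun f => f t) (a (nth x0 ps m)))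
  else false.

Definition follows_script (a : Asg AP) (h : seq (qpos pre)) (v' : qpos pre) : Prop :=
  (size h).-1 %% n.+1 < n ->
  sval v' (nth x0 ps ((size h).-1 %% n.+1)) =
    Some (scripted_bit a ((size h).-1 %% n.+1) ((size h).-1 %/ n.+1)).

(* The scripted player plays the bits of [a], whenever that is a legal move. *)
Definition scripted (a : Asg AP) (h : seq (qpos pre)) : qpos pre :=
  pick (pick (qinit pre) (qmove (lst h))) (fun v' => qmove (lst h) v' /\ follows_script a h v').

Lemma scripted_move a h : qmove (lst h) (scripted a h).
Proof. by apply: pick_ind => [|x []//]; exact: pickP (qmove_total _). Qed.

Lemma scripted_strategy b a : @strategy G b (scripted a).
Proof. by move=> h _ _; exact: scripted_move. Qed.

Variable s : seq (qpos pre) -> qpos pre.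

Definition profile a := if pl then mix (scripted a) s else mix s (scripted a).

Lemma profileE a h : profile a h = if qEloise (lst h) == pl then scripted a h else s h.
Proof. by rewrite /profile /mix; case: pl; case: (qEloise _). Qed.

Lemma profile_legal a : @strategy G (~~ pl) s -> legal (profile a).
Proof.
move=> Hs h hh; rewrite /profile /mix; case Epl: pl Hs => Hs;
  case E: (qEloise (lst h)); try apply: scripted_move; by apply: Hs.
Qed.

Lemma play_bit_scripted a k : @strategy G (~~ pl) s -> k %% n.+1 < n ->
  scripted_at (k %% n.+1) ->
  play_bit (profile a) k = scripted_bit a (k %% n.+1) (k %/ n.+1).
Proof.
move=> Hs hr hQ; have D := dom_pos (profile_legal a Hs) k.
set h := hist (profile a) k.
have Esc : profile a h = scripted a h.
  rewrite profileE; change (lst h) with (pos (profile a) k).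
  rewrite (qEloiseE (ltnW hr) D) hr /=.
  by move: hQ; rewrite /scripted_at; case: pl; case: (qq _).
have Hex : exists v', qmove (lst h) v' /\ follows_script a h v'.
  exists (ext_qpos (scripted_bit a (k %% n.+1) (k %/ n.+1)) D hr); split.
    exact: (qmove_ext D hr).
  by rewrite /follows_script size_hist /= /ext_val eqxx.
have [_ Hsp] := pickP (pick (qinit pre) (qmove (lst h))) Hex.
move: Hsp; rewrite /play_bit posS Esc /follows_script /h size_hist /= => Hsp.
by rewrite /scripted /follows_script size_hist /= (Hsp hr).
Qed.

Lemma play_bit_causal a1 a2 k :
  (forall k', k' <= k ->
     scripted_bit a1 (k' %% n.+1) (k' %/ n.+1) = scripted_bit a2 (k' %% n.+1) (k' %/ n.+1)) ->
  play_bit (profile a1) k = play_bit (profile a2) k.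
Proof.
move=> H.
have Eh j : j <= k.+1 -> hist (profile a1) j = hist (profile a2) j.
  elim: j => [//|j IH] hj; rewrite [hist _ j.+1]/= [hist (profile a2) j.+1]/= -IH ?(ltnW hj) //.
  have Escr : scripted a1 (hist (profile a1) j) = scripted a2 (hist (profile a1) j).
    by rewrite /scripted /follows_script size_hist /= H.
  by rewrite !profileE Escr.
by rewrite /play_bit /pos Eh.
Qed.

Definition response (q : AP) (a : Asg AP) : nat -> bool :=
  fun t => play_bit (profile a) (t * n.+1 + index q ps).

Lemma response_dep q a1 a2 :
  (forall m, m < n -> scripted_at m -> a1 (nth x0 ps m) = a2 (nth x0 ps m)) ->
  response q a1 = response q a2.
Proof.
move=> H; apply: funext => t; apply: play_bit_causal => k' _; rewrite /scripted_bit.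
by case: ifP => // /andP [h1 h2]; rewrite H.
Qed.

Lemma response_fnc P S q : q \in ps -> (forall m, m < n -> scripted_at m -> P (nth x0 ps m)) ->
  (forall p, S p -> p \in ps -> index q ps < index p ps) ->
  Fnc_sigma P (spec_union (specB AP) (set0, S)) (response q).
Proof.
move=> qin HP HS.
have hj : index q ps < n by rewrite -size_ps index_mem.
have hj1 : index q ps < n.+1 by apply: (leq_trans hj (leqnSn n)).
split => p Sp Pp K c1 c2 _ _ [Ho Hp]; apply: play_bit_causal => k' hk'; rewrite /scripted_bit;
  case: ifP => // /andP [hm hQ];
  (case: (eqVneq (nth x0 ps (k' %% n.+1)) p) => [Ep|Ne];
    last by rewrite Ho //; [apply: HP | apply/eqP]); rewrite Ep Hp //.
  by have := leq_div2r n.+1 hk'; rewrite (divmod_round K hj1).2.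
case: Sp => // Sp.
have pin : p \in ps by rewrite -Ep mem_nth // size_ps.
have := HS p Sp pin; rewrite -Ep index_uniq ?size_ps // => hlt.
rewrite ltnNge; apply/negP => hK.
have := leq_mul2r n.+1 K (k' %/ n.+1); rewrite hK orbT => hM.
have E := divn_eq k' n.+1.
move: hM E hlt hk'; move: (K * n.+1) (k' %/ n.+1 * n.+1) (k' %% n.+1) => A B C; lia.
Qed.

Definition consistent (D : set AP) (y : Asg AP) : Prop :=
  (forall q, y q = None <-> ~ D q) /\
  (forall m, m < n -> ~~ scripted_at m -> D (nth x0 ps m) ->
     y (nth x0 ps m) = Some (response (nth x0 ps m) y)).

Lemma consistent_eqv D1 D2 y : (forall q, D1 q <-> D2 q) -> consistent D1 y -> consistent D2 y.
Proof.
move=> HD [H1 H2]; split; last by move=> m hm hQ /HD; apply: H2.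
by move=> q; rewrite H1; split => H hq; apply: H; apply/HD.
Qed.

Lemma consistent_empty : consistent set0 (@empty_asg AP).
Proof. by split; [move=> q; split => // _ | move=> m _ _ []]. Qed.

Lemma upd_None D (a : Asg AP) p f : (forall q, a q = None <-> ~ D q) ->
  forall q, upd a p f q = None <-> ~ (D `|` [set p]) q.
Proof.
move=> H1 q; rewrite /upd; case: eqP => [->|ne].
  by split => // H; exfalso; apply: H; right.
rewrite H1; split => H; first by case => // /ne.
by move=> Dq; apply: H; left.
Qed.

Lemma consistent_upd_scripted D a m0 f : consistent D a ->
  (forall m, m < n -> ~~ scripted_at m -> ~ D (nth x0 ps m)) ->
  m0 < n -> scripted_at m0 -> consistent (D `|` [set nth x0 ps m0]) (upd a (nth x0 ps m0) f).
Proof.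
move=> [H1 H2] HD hm0 hQ; split; first exact: upd_None.
move=> m hm hnQ [Dm|Em]; first by exfalso; apply: (HD m hm hnQ Dm).
by move: hnQ; rewrite (nth_ps_inj hm hm0 Em) hQ.
Qed.

(* A non-scripted proposition may be given its response; this does not alter
   the other responses, which only read scripted propositions. *)
Lemma consistent_upd_response D a m0 : consistent D a -> m0 < n -> ~~ scripted_at m0 ->
  consistent (D `|` [set nth x0 ps m0]) (upd a (nth x0 ps m0) (response (nth x0 ps m0) a)).
Proof.
move=> [H1 H2] hm0 hnQ0.
have Fd q g : response q (upd a (nth x0 ps m0) g) = response q a.
  apply: response_dep => m hm hQ; rewrite /upd; case: eqP => // E.
  by move: hnQ0; rewrite -(nth_ps_inj hm hm0 E) hQ.
split; first exact: upd_None.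
move=> m hm hnQ HDm; rewrite Fd /upd; case: eqP => [->//|ne].
by case: HDm => [Dm|//]; apply: H2.
Qed.

Lemma consistent_play y D : @strategy G (~~ pl) s -> consistent D y ->
  (forall q, D q <-> q \in ps) -> y = play_asg (profile y).
Proof.
move=> Hs [H1 H2] HD; apply: funext => q; rewrite /play_asg.
case: ifP => qin; last by apply/H1; move/HD; rewrite qin.
have hj : index q ps < n by rewrite -size_ps index_mem.
have hj1 : index q ps < n.+1 by apply: (leq_trans hj (leqnSn n)).
have Eq : nth x0 ps (index q ps) = q := nth_index x0 qin.
case hQ: (scripted_at (index q ps)); last first.
  by have := H2 _ hj (negbT hQ); rewrite Eq => ->; last exact/HD.
have : y q <> None by move=> E; exact: ((H1 q).1 E ((HD q).2 qin)).
case E: (y q) => [f|] // _; congr Some; apply: funext => t.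
rewrite play_bit_scripted // (divmod_round t hj1).1 ?(divmod_round t hj1).2 //.
by rewrite /scripted_bit hj hQ /= Eq E.
Qed.

Definition scripted_props (l : qprefix AP) : set AP :=
  [set q | q \in [seq qp e | e <- l & quant_eqb (qq e) Qpl]].
Definition other_props (l : qprefix AP) : set AP :=
  [set q | q \in [seq qp e | e <- l & ~~ quant_eqb (qq e) Qpl]].

Lemma mem_map_filter_nth (p : pred (qentry AP)) (l : seq (qentry AP)) q :
  q \in [seq qp e | e <- l & p e] ->
  exists i, [/\ i < size l, nth x0 [seq qp e | e <- l] i = q & p (nth e0 l i)].
Proof.
elim: l => //= e l IH; case pe: (p e) => /=; last first.
  by move/IH => [i [h1 h2 h3]]; exists i.+1.
rewrite in_cons => /orP [/eqP ->|/IH [i [h1 h2 h3]]]; first by exists 0.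
by exists i.+1.
Qed.

Lemma scripted_props_at m : m < n -> scripted_props pre (nth x0 ps m) -> scripted_at m.
Proof.
move=> hm /mem_map_filter_nth [i [hi Ei hQ]].
by rewrite /scripted_at (nth_ps_inj hm hi (esym Ei)).
Qed.

Lemma scripted_at_props m : m < n -> scripted_at m -> scripted_props pre (nth x0 ps m).
Proof.
rewrite /scripted_at /scripted_props /=; elim: pre m => //= e l IH [|m] /= hm hQ.
  by rewrite hQ /= in_cons eqxx.
by case: (quant_eqb _ _) => //=; rewrite ?in_cons IH ?orbT.
Qed.

Lemma scripted_props_cat s0 s' q : pre = s0 ++ s' ->
  scripted_props s0 q -> scripted_props pre q.
Proof. by move=> E; rewrite /scripted_props /= E filter_cat map_cat mem_cat => ->. Qed.

Lemma scripted_props_other s0 s' m : pre = s0 ++ s' -> m < n -> ~~ scripted_at m ->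
  ~ scripted_props s0 (nth x0 ps m).
Proof. by move=> E hm hQ /(scripted_props_cat E) /(scripted_props_at hm); apply/negP. Qed.

Lemma split_at s0 e s' : pre = s0 ++ e :: s' ->
  [/\ size s0 < n, nth x0 ps (size s0) = qp e & nth e0 pre (size s0) = e].
Proof.
move=> E; rewrite E size_cat /= map_cat !nth_cat size_map ltnn subnn; split => //.
by rewrite -addSnnS leq_addr.
Qed.

Lemma index_after s0 e s' p : pre = s0 ++ e :: s' -> p \in [seq qp e | e <- s'] ->
  size s0 < index p ps.
Proof.
move=> E pin; have : uniq [seq qp e | e <- s0 ++ e :: s'] by rewrite -E.
rewrite map_cat cat_uniq => /and3P [_ hn /= /andP [hne _]].
have pn : p \notin [seq qp e | e <- s0].
  by move/hasPn: hn => hn; have := hn p; rewrite in_cons pin orbT; move/(_ isT).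
rewrite E map_cat index_cat (negbTE pn) size_map /=.
case: eqP => [Ep|_]; last by rewrite addnS ltnS leq_addr.
by move: hne; rewrite Ep pin.
Qed.

Lemma scripted_props_rcons s0 e q : scripted_props (rcons s0 e) q <->
  (if quant_eqb (qq e) Qpl then scripted_props s0 q \/ q = qp e else scripted_props s0 q).
Proof.
rewrite /scripted_props /= filter_rcons; case: (quant_eqb (qq e) Qpl) => //.
rewrite map_rcons mem_rcons in_cons; split; first by case/orP => [/eqP|]; [right|left].
by case => [->|->]; rewrite ?eqxx ?orbT.
Qed.

Lemma other_props_rcons s0 e q : other_props (rcons s0 e) q <->
  (if quant_eqb (qq e) Qpl then other_props s0 q else other_props s0 q \/ q = qp e).
Proof.
rewrite /other_props /= filter_rcons; case: (quant_eqb (qq e) Qpl) => //=.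
rewrite map_rcons mem_rcons in_cons; split; first by case/orP => [/eqP|]; [right|left].
by case => [->|->]; rewrite ?eqxx ?orbT.
Qed.

Lemma coherent_other q a : quant_eqb q Qpl = false -> coherent q a = ~~ coherent Qpl a.
Proof. by case: pl; case: q; case: a. Qed.

Local Notation scripted_block s' :=
  [seq QE Qpl (specB AP) (qp e) | e <- s' & quant_eqb (qq e) Qpl].

Lemma scripted_block_sub a : coherent Qpl a = false -> forall s' s0, pre = s0 ++ s' ->
  forall P HX X, HX X -> X `<=` consistent (scripted_props s0) ->
  exists Y, evl_from a P HX (scripted_block s') Y /\ Y `<=` consistent (scripted_props pre).
Proof.
move=> hc; elim => [|e s' IH] s0 E P HX X hX XG.
  by exists X; split => // y /XG; apply: consistent_eqv => q; rewrite E cats0.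
have E' : pre = rcons s0 e ++ s' by rewrite E cat_rcons.
have [hsz Enth Ee] := split_at E.
rewrite /=; case hQe: (quant_eqb (qq e) Qpl) => /=; last first.
  apply: (IH _ E' P HX X hX) => y /XG; apply: consistent_eqv => q.
  by rewrite (propext (scripted_props_rcons s0 e q)) hQe.
rewrite /evl_step /= hc.
have [Y1 [hY1 Y1s]] := dual_ext_sigma_sub P (specB AP) (qp e) hX XG.
apply: (IH _ E' _ _ _ hY1) => y /Y1s [a0 [f [Ga0 ->]]]; rewrite -Enth.
have hQ : scripted_at (size s0) by rewrite /scripted_at Ee hQe.
apply: consistent_eqv (consistent_upd_scripted f Ga0 (fun m => scripted_props_other E) hsz hQ) => q.
by rewrite (propext (scripted_props_rcons s0 e q)) hQe Enth.
Qed.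

Lemma scripted_block_meets a : coherent Qpl a = true -> forall s' s0, pre = s0 ++ s' ->
  forall P HX, (forall X, HX X -> meets X (consistent (scripted_props s0))) ->
  forall Y, evl_from a P HX (scripted_block s') Y -> meets Y (consistent (scripted_props pre)).
Proof.
move=> hc; elim => [|e s' IH] s0 E P HX HM Y.
  move=> /HM hY; apply: (meets_sub hY) => y.
  by apply: consistent_eqv => q; rewrite E cats0.
have E' : pre = rcons s0 e ++ s' by rewrite E cat_rcons.
have [hsz Enth Ee] := split_at E.
rewrite /=; case hQe: (quant_eqb (qq e) Qpl) => /=; last first.
  apply: (IH _ E') => X /HM hm; apply: (meets_sub hm) => y; apply: consistent_eqv => q.
  by rewrite (propext (scripted_props_rcons s0 e q)) hQe.
rewrite /evl_step /= hc; apply: (IH _ E') => X hX.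
apply: (meets_sub (ext_sigma_meets HM hX)) => y [a0 [f [Ga0 ->]]]; rewrite -Enth.
have hQ : scripted_at (size s0) by rewrite /scripted_at Ee hQe.
apply: consistent_eqv (consistent_upd_scripted f Ga0 (fun m => scripted_props_other E) hsz hQ) => q.
by rewrite (propext (scripted_props_rcons s0 e q)) hQe Enth.
Qed.

Lemma response_fnc_at s0 e s' P : pre = s0 ++ e :: s' ->
  (forall m, m < n -> scripted_at m -> P (nth x0 ps m)) ->
  Fnc_sigma P (spec_union (specB AP) (set0, props_after Qpl s')) (response (qp e)).
Proof.
move=> E HP; have [hsz Enth Ee] := split_at E.
apply: response_fnc => //; first by rewrite -Enth mem_nth // size_ps.
move=> p Sp pin; rewrite -Enth index_uniq ?size_ps //; apply: (index_after E).
exact: (mem_map_filter Sp).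
Qed.

(* Remaining quantifiers (non-scripted, hence coherent): the response is used
   as functor, and some member consists of consistent assignments. *)
Lemma responses_sub a : coherent Qpl a = false -> forall s' s0, pre = s0 ++ s' ->
  forall P HX X, (forall m, m < n -> scripted_at m -> P (nth x0 ps m)) -> HX X ->
  X `<=` consistent (scripted_props pre `|` other_props s0) ->
  exists Y, evl_from a P HX (canon_rest Qpl s') Y /\
    Y `<=` consistent (scripted_props pre `|` other_props pre).
Proof.
move=> hc; elim => [|e s' IH] s0 E P HX X HP hX XG.
  by exists X; split => // y /XG; apply: consistent_eqv => q; rewrite E cats0.
have E' : pre = rcons s0 e ++ s' by rewrite E cat_rcons.
have [hsz Enth Ee] := split_at E.
rewrite /=; case hQe: (quant_eqb (qq e) Qpl) => /=.
  apply: (IH _ E' P HX X HP hX) => y /XG; apply: consistent_eqv => q /=.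
  by rewrite (propext (other_props_rcons s0 e q)) hQe.
rewrite /evl_step /= (coherent_other a hQe) hc /=.
have [hY1 Y1s] := ext_sigma_sub (qp e) hX XG (response_fnc_at E HP).
apply: (IH _ E' (P `|` [set qp e]) _ _ _ hY1); first by move=> m hm hQ; left; exact: HP.
move=> y /Y1s [a0 [Ga0 ->]]; rewrite -Enth.
have hQ : ~~ scripted_at (size s0) by rewrite /scripted_at Ee hQe.
apply: consistent_eqv (consistent_upd_response Ga0 hsz hQ) => q.
by rewrite /= (propext (other_props_rcons s0 e q)) hQe Enth; tauto.
Qed.

Lemma responses_meets a : coherent Qpl a = true -> forall s' s0, pre = s0 ++ s' ->
  forall P HX, (forall m, m < n -> scripted_at m -> P (nth x0 ps m)) ->
  (forall X, HX X -> meets X (consistent (scripted_props pre `|` other_props s0))) ->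
  forall Y, evl_from a P HX (canon_rest Qpl s') Y ->
    meets Y (consistent (scripted_props pre `|` other_props pre)).
Proof.
move=> hc; elim => [|e s' IH] s0 E P HX HP HM Y.
  move=> /HM hY; apply: (meets_sub hY) => y.
  by apply: consistent_eqv => q; rewrite E cats0.
have E' : pre = rcons s0 e ++ s' by rewrite E cat_rcons.
have [hsz Enth Ee] := split_at E.
rewrite /=; case hQe: (quant_eqb (qq e) Qpl) => /=.
  apply: (IH _ E' P HX HP) => X /HM hm; apply: (meets_sub hm) => y.
  apply: consistent_eqv => q /=.
  by rewrite (propext (other_props_rcons s0 e q)) hQe.
rewrite /evl_step /= (coherent_other a hQe) hc /=.
apply: (IH _ E' (P `|` [set qp e])); first by move=> m hm hQ; left; exact: HP.
move=> X hX; apply: (meets_sub (dual_ext_sigma_meets HM (response_fnc_at E HP) hX)).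
move=> y [a0 [Ga0 ->]]; rewrite -Enth.
have hQ : ~~ scripted_at (size s0) by rewrite /scripted_at Ee hQe.
apply: consistent_eqv (consistent_upd_response Ga0 hsz hQ) => q.
by rewrite /= (propext (other_props_rcons s0 e q)) hQe Enth; tauto.
Qed.

Lemma scripted_other_props q : (scripted_props pre `|` other_props pre) q <-> q \in ps.
Proof.
rewrite -(mem_map_filter_split (@qp AP) (fun e => quant_eqb (qq e) Qpl)).
by split => [[]->|/orP []]; rewrite ?orbT //; [left|right].
Qed.

Lemma consistent_start : [set @empty_asg AP] `<=` consistent (scripted_props [::]).
Proof. by move=> y ->; apply: consistent_eqv consistent_empty. Qed.

Lemma consistent_scripted_start : consistent (scripted_props pre) `<=`
  consistent (scripted_props pre `|` other_props [::]).
Proof. by move=> y; apply: consistent_eqv => q; split => [|[]//]; left. Qed.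

Lemma scripted_in_block m : m < n -> scripted_at m ->
  add_props set0 (scripted_block pre) (nth x0 ps m).
Proof. by move=> hm hQ; apply: add_props_mem; rewrite -map_comp; exact: scripted_at_props. Qed.

Lemma evl_canon_outcomes_sub a : coherent Qpl a = false -> @strategy G (~~ pl) s ->
  exists Y, evl a (Defs.canon Qpl pre) Y /\ Y `<=` [set y | y = play_asg (profile y)].
Proof.
move=> hc Hs; rewrite /evl /Defs.canon evl_from_cat.
have h0 : [set [set @empty_asg AP]] [set @empty_asg AP] by [].
have [Y1 [hY1 Y1G]] :=
  scripted_block_sub hc (erefl : pre = [::] ++ pre) set0 h0 consistent_start.
have [Y [hY YG]] := responses_sub hc (erefl : pre = [::] ++ pre) scripted_in_block hY1
  (subset_trans Y1G consistent_scripted_start).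
exists Y; split; first exact: hY.
by move=> y /YG Gy; exact: (consistent_play Hs Gy scripted_other_props).
Qed.

Lemma evl_canon_outcomes_meet a : coherent Qpl a = true -> @strategy G (~~ pl) s ->
  forall Y, evl a (Defs.canon Qpl pre) Y -> exists y, Y y /\ y = play_asg (profile y).
Proof.
move=> hc Hs Y; rewrite /evl /Defs.canon evl_from_cat => hY.
have M0 X : [set [set @empty_asg AP]] X -> meets X (consistent (scripted_props [::])).
  by move=> ->; exists (@empty_asg AP); split => //; exact: consistent_start.
have M1 := scripted_block_meets hc (erefl : pre = [::] ++ pre) M0.
have [y [Yy Gy]] := responses_meets hc (erefl : pre = [::] ++ pre) scripted_in_block
  (fun X hX => meets_sub (M1 _ X hX) consistent_scripted_start) hY.
by exists y; split => //; exact: (consistent_play Hs Gy scripted_other_props).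
Qed.

End Counterplay.
End Plays.

Section Winning.
Variable AP : eqType.
Implicit Types (pre : qprefix AP) (Psi : set (Asg AP)).

(* Eloise's winning strategy, playing against scripted universal values,
   yields an element of evl(C_AE) all of whose assignments are won, i.e. in Psi. *)
Lemma Eloise_wins_evl pre Psi (x0 : AP) : uniq [seq qp e | e <- pre] ->
  Eloise_wins (qgame pre Psi) -> exists E, evl AltEA (C_AE pre) E /\ E `<=` Psi.
Proof.
move=> U [sE [HsE Hwin]].
have [Y [hY YG]] := evl_canon_outcomes_sub x0 U (pl:=false) (a:=AltEA) erefl HsE.
exists Y; split => // y /YG ->.
apply/(obs_in_W_play x0 U (profile_legal x0 U (pl:=false) y HsE)).
by rewrite /profile /= -induced_playE; apply: Hwin; exact: scripted_strategy.
Qed.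

(* Abelard's winning strategy, playing against scripted existential values,
   finds in every element of evl(C_EA) an assignment lost by Eloise. *)
Lemma Abelard_wins_evl pre Psi (x0 : AP) : uniq [seq qp e | e <- pre] ->
  Abelard_wins (qgame pre Psi) -> forall E, evl AltEA (C_EA pre) E -> ~ (E `<=` Psi).
Proof.
move=> U [sA [HsA Hlose]] E hE Esub.
have [y [Ey Ey_play]] := evl_canon_outcomes_meet x0 U (pl:=true) (a:=AltEA) erefl HsA hE.
have := Esub y Ey; rewrite Ey_play.
move/(obs_in_W_play x0 U (profile_legal x0 U (pl:=true) y HsA)).
by rewrite /profile /= -induced_playE; apply: Hlose; exact: scripted_strategy.
Qed.

(* For the empty prefix the only position is the empty valuation, every play
   observes it forever, and both evolutions are {{empty assignment}}. *)
Lemma qpos_nil (v : qpos (@nil (qentry AP))) : sval v = fun _ => None.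
Proof.
have [m [hm h]] := qpos_dom v; apply: funext => q.
by apply: (dom_None h); rewrite /dom_prefix /=; case: m {h hm}.
Qed.

Lemma dom_qpos_nil (v : qpos (@nil (qentry AP))) : dom (sval v) = ap [::].
Proof. by rewrite qpos_nil; apply/seteqP; split => q //=; case. Qed.

Lemma empty_prefix_games Psi :
  (Eloise_wins (qgame [::] Psi) -> exists E, evl AltEA (C_AE [::]) E /\ E `<=` Psi) /\
  (Abelard_wins (qgame [::] Psi) -> forall E, evl AltEA (C_EA [::]) E -> ~ (E `<=` Psi)).
Proof.
have Hs b : @strategy (qgame [::] Psi) b (fun _ => qinit [::]).
  by move=> h _ _; right; split; [exact: dom_qpos_nil | apply/seteqP; split => q //=; case].
split.
  move=> [sE [HsE Hwin]]; have [o [_ [chi [Pchi Hw]]]] := Hwin _ (Hs false).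
  exists [set @empty_asg AP]; split => // y ->.
  suff <- : chi = @empty_asg AP by [].
  apply: funext => q; have := congr1 (fun f => f q) (Hw 0).
  by rewrite qpos_nil /word /=; case: (chi q).
move=> [sA [HsA Hlose]] E hE Esub; apply: (Hlose _ (Hs true)).
exists (@induced_play (qgame [::] Psi) (fun _ => qinit [::]) sA); split.
  by exists id; split => //; split; [move=> k; exact: dom_qpos_nil | split => // j _; exists j].
by exists (@empty_asg AP); split; [apply: Esub; rewrite hE | move=> t; rewrite qpos_nil].
Qed.

End Winning.

Theorem mainTheorem15 (AP : eqType) (pre : qprefix AP) (Psi : set (Asg AP)) :
  behavioral_prefix pre ->
  uniq [seq qp e | e <- pre] ->
  Psi `<=` AsgP (ap pre) ->
  Borelian (ap pre) Psi ->
  (Eloise_wins (qgame pre Psi) ->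
     exists E, evl AltEA (C_AE pre) E /\ E `<=` Psi) /\
  (Abelard_wins (qgame pre Psi) ->
     forall E, evl AltEA (C_EA pre) E -> ~ (E `<=` Psi)).
Proof.
move=> _ U _ _.
case: pre U => [|e r] U; first exact: empty_prefix_games.
split; [exact: (Eloise_wins_evl (qp e)) | exact: (Abelard_wins_evl (qp e))].
Qed.
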